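(* Let $X$ and $\Sigma$ be finite alphabets, let $A$ be a $P(X)$-automaton over $\Sigma$ with state set $Q$ accepting the language $L \subseteq \Sigma^*$, each of whose edges is labelled by a pair $(y, a)$ with $y \in \{\epsilon\} \cup X \cup \{x^{-1} : x \in X\}$ and $a \in \Sigma \cup \{\epsilon\}$. Let $\#$ be a new symbol not in $X$, put $X^\# = X \cup \{\#\}$, and let $A'$ be the finite automaton with edges labelled by elements of $(\overline{X^\#})^* \times \Sigma^*$ constructed as follows: its state set is $Q_+ \cup Q_-$, where $Q_+ = \{q_+ : q \in Q\}$ and $Q_- = \{q_- : q \in Q\}$ are disjoint copies of $Q$; its start state is $q_+$ where $q$ is the start state of $A$; its final states are the $q_-$ with $q$ a final state of $A$; it has an edge from $p_+$ to $q_+$ labelled $(x\#, a)$ whenever $A$ has an edge from $p$ to $q$ labelled $(x,a)$ with $x \in X$; an edge from $p_-$ to $q_+$ labelled $(x^{-1}\#, a)$ whenever $A$ has an edge from $p$ to $q$ labelled $(x^{-1}, a)$ with $x \in X$; an edge from $p_+$ to $q_+$ labelled $(\epsilon, a)$ whenever $A$ has an edge from $p$ to $q$ labelled $(\epsilon, a)$; for each $q \in Q$ an edge from $q_+$ to $q_-$ labelled $(\epsilon,\epsilon)$; and for each $q \in Q$ a loop at $q_-$ labelled $(\#^{-1}, \epsilon)$. Then $A'$, interpreted as a free group automaton (i.e. an $F(X^\#)$-automaton, first components read in $F(X^\#)$), accepts exactly $L$, and $A'$, interpreted as a polycyclic monoid automaton (a $P(X^\#)$-automaton), also accepts exactly 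$L$.
   Context: For a monoid $M$ with identity $1$ and a finite alphabet $\Sigma$, an $M$-automaton over $\Sigma$ is a finite directed graph whose edges are labelled by elements of $M \times \Sigma^*$, with an initial vertex and a set of terminal vertices; a word $w \in \Sigma^*$ is accepted if some path from the initial vertex to a terminal vertex has label (product of edge labels in $M \times \Sigma^*$) equal to $(1,w)$. For an alphabet $Y$, $\overline{Y} = \{y, y^{-1} : y \in Y\}$; letters of $Y$ are positive generators and letters $y^{-1}$ negative generators. The polycyclic monoid $P(Y)$ is the monoid of partial functions on $Y^*$ (composed left to right: $fg$ means apply $f$ then $g$) generated by $y: w \mapsto wy$ (defined everywhere) and $y^{-1}: wy \mapsto w$ (defined on $Y^*y$), $y \in Y$; a word over $\overline{Y}$ thus represents an element of $P(Y)$, and $\epsilon$ represents the identity. $F(Y)$ is the free group on $Y$, with presentation $\langle \overline{Y} \mid yy^{-1} = y^{-1}y = 1 \ (y \in Y)\rangle$. A word $u \in \overline{Y}^*$ labelling an edge is interpreted as the element of $P(Y)$ or $F(Y)$ it represents. *)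

From mathcomp Require Import all_boot.
From Stdlib Require Import Relations.
From Stdlib Require List.
Set Implicit Arguments. Unset Strict Implicit. Unset Printing Implicit Defensive.

(* Letters of the signed alphabet \overline{Y}: (y, true) = y, (y, false) = y^-1. *)
Definition sletter (Y : Type) := (Y * bool)%type.

(* Action of a single generator on an (optional) word of Y^* :
   y : w |-> w y (everywhere defined); y^-1 : w y |-> w (defined on Y^* y). *)
Definition pstep (Y : eqType) (o : option (seq Y)) (l : sletter Y) : option (seq Y) :=
  match o with
  | None => None
  | Some w =>
      if l.2 then Some (rcons w l.1)
      else match rev w with
           | y :: r => if y == l.1 then Some (rev r) else None
           | [::] => None
           end
  end.

Definition pact (Y : eqType) (u : seq (sletter Y)) (w : seq Y) : option (seq Y) :=
  foldl (@pstep Y) (Some w) u.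

Definition P_one (Y : eqType) (u : seq (sletter Y)) : Prop :=
  forall w : seq Y, pact u w = Some w.

Inductive fstep (Y : Type) : seq (sletter Y) -> seq (sletter Y) -> Prop :=
| fstep_ins (u v : seq (sletter Y)) (y : Y) (b : bool) :
    fstep (u ++ v) (u ++ (y, b) :: (y, ~~ b) :: v).

Definition F_one (Y : Type) (u : seq (sletter Y)) : Prop :=
  clos_refl_sym_trans _ (@fstep Y) u [::].

Definition edge (Q Y Sigma : Type) :=
  (Q * (seq (sletter Y) * seq Sigma) * Q)%type.

Record automaton (Q Y Sigma : Type) := Automaton {
  a_start : Q;
  a_final : Q -> bool;
  a_edges : seq (edge Q Y Sigma)
}.

Fixpoint is_path (Q Y Sigma : Type) (E : seq (edge Q Y Sigma)) (p q : Q)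
    (es : seq (edge Q Y Sigma)) : Prop :=
  match es with
  | [::] => p = q
  | e :: es' => List.In e E /\ e.1.1 = p /\ is_path E e.2 q es'
  end.

Definition path_label (Q Y Sigma : Type) (es : seq (edge Q Y Sigma)) :
    seq (sletter Y) * seq Sigma :=
  (flatten (map (fun e => e.1.2.1) es), flatten (map (fun e => e.1.2.2) es)).

(* Acceptance for an M-automaton, where [one u] says u represents 1 in M. *)
Definition accepts (Q Y Sigma : Type) (one : seq (sletter Y) -> Prop)
    (A : automaton Q Y Sigma) (w : seq Sigma) : Prop :=
  exists (es : seq (edge Q Y Sigma)) (q : Q),
    is_path (a_edges A) (a_start A) q es /\ a_final A q /\
    one (path_label es).1 /\ (path_label es).2 = w.

Definition P_accepts (Q : Type) (Y : eqType) (Sigma : Type) (A : automaton Q Y Sigma) :=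
  accepts (@P_one Y) A.
Definition F_accepts (Q Y Sigma : Type) (A : automaton Q Y Sigma) :=
  accepts (@F_one Y) A.

(* X^# = option X, with None playing the role of the new symbol #.
   States: Q + Q, with inl q = q_+ and inr q = q_-. *)
Definition hash_edge (Q X Sigma : Type) (e : edge Q X Sigma) :
    seq (edge (Q + Q) (option X) Sigma) :=
  let: (p, (y, a), q) := e in
  match y with
  | [::] => [:: (inl p, ([::], a), inl q)]
  | [:: (x, true)] => [:: (inl p, ([:: (Some x, true); (None, true)], a), inl q)]
  | [:: (x, false)] => [:: (inr p, ([:: (Some x, false); (None, true)], a), inl q)]
  | _ => [::]
  end.

Definition hash_automaton (Q : finType) (X Sigma : Type) (A : automaton Q X Sigma) :
    automaton (Q + Q) (option X) Sigma :=
  {| a_start := inl (a_start A);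
     a_final := fun s => match s with inl _ => false | inr q => a_final A q end;
     a_edges := flatten (map (@hash_edge Q X Sigma) (a_edges A))
                ++ [seq (inl q, ([::], [::]), inr q) | q <- enum Q]
                ++ [seq (inr q, ([:: (None, false)], [::]), inr q) | q <- enum Q] |}.

From mathcomp Require Import all_boot.
From Stdlib Require Import Relation_Operators.
From Stdlib Require List.
Set Implicit Arguments. Unset Strict Implicit. Unset Printing Implicit Defensive.

(* Soundness: a path of A' projects to a path of A whose label is the label of
   A' with every # erased, and erasing # turns a computation of P(X^#) into one
   of P(X).  Completeness: A' simulates A, keeping a # on top of every letter of
   X on the stack; to pop x it first moves to the minus copy and pops the #'s
   above x, then pushes a fresh #; at the end the minus copy pops the remaining
   #'s.  For the free group, a label of A' has a negative letter followed by a
   positive one only in the factors x^-1 #, and this survives cancellations.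
   So freely reducing such a label only ever cancels factors y y^-1, each of
   which acts as the identity of P(X^#): if the label is 1 in F(X^#), it is 1
   in P(X^#). *)

Definition inv_letter (Y : Type) (l : sletter Y) : sletter Y := (l.1, ~~ l.2).

Lemma InP (T : eqType) (x : T) (s : seq T) : List.In x s <-> x \in s.
Proof.
elim: s => [|y s IH] //=; rewrite in_cons; split.
- by case=> [->|/IH ->]; rewrite ?eqxx ?orbT.
- by case/orP=> [/eqP ->|/IH]; [left|right].
Qed.

Lemma nseqSr (T : Type) n (x : T) : nseq n.+1 x = rcons (nseq n x) x.
Proof. by elim: n => //= n <-. Qed.

Section PolycyclicAction.

Variable Y : eqType.
Implicit Types (l : sletter Y) (u v : seq (sletter Y)) (s t w : seq Y) (y : Y).

Lemma foldl_pstep_None u : foldl (@pstep Y) None u = None.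
Proof. by elim: u. Qed.

Lemma pact_push y u s : pact ((y, true) :: u) s = pact u (rcons s y).
Proof. by []. Qed.

Lemma pact_pop y u s : pact ((y, false) :: u) (rcons s y) = pact u s.
Proof. by rewrite /pact /= rev_rcons eqxx revK. Qed.

Lemma pact_popP y u s t :
  pact ((y, false) :: u) s = Some t -> exists2 s', s = rcons s' y & pact u s' = Some t.
Proof.
case/lastP: s => [|s z]; first by rewrite /pact /= foldl_pstep_None.
have [<-|ne] := eqVneq z y; first by rewrite pact_pop; exists s.
by rewrite /pact /= rev_rcons revK (negbTE ne) foldl_pstep_None.
Qed.

Lemma pact_cat u v s :
  pact (u ++ v) s = if pact u s is Some s' then pact v s' else None.
Proof. by rewrite /pact foldl_cat; case: (foldl _ _ u) => //; rewrite foldl_pstep_None. Qed.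

Lemma pact_catl u s t w : pact u s = Some t -> pact u (w ++ s) = Some (w ++ t).
Proof.
elim: u s => [|[y []] u IH] s; first by move=> [->].
- by rewrite !pact_push rcons_cat; apply: IH.
- by case/pact_popP=> s' -> /IH; rewrite -rcons_cat pact_pop.
Qed.

Lemma P_oneE u : P_one u <-> pact u [::] = Some [::].
Proof. by split=> [|H w]; [apply | have := pact_catl w H; rewrite !cats0]. Qed.

Lemma pact_cancel_pos u l v s :
  l.2 -> pact (u ++ l :: inv_letter l :: v) s = pact (u ++ v) s.
Proof.
case: l => y [] // _; rewrite !pact_cat; case: (pact u s) => // s'.
by rewrite pact_push pact_pop.
Qed.

Local Notation feq := (clos_refl_sym_trans _ (@fstep Y)).

Lemma pact_feq u s t :
  pact u s = Some t -> feq (map (pair^~ true) s ++ u) (map (pair^~ true) t).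
Proof.
elim: u s => [|[y []] u IH] s; first by move=> [->]; rewrite cats0; apply: rst_refl.
- by rewrite pact_push => /IH; rewrite map_rcons cat_rcons.
- case/pact_popP=> s' -> /IH; rewrite map_rcons cat_rcons.
  apply: rst_trans; apply/rst_sym/rst_step.
  exact: (@fstep_ins Y (map (pair^~ true) s') u y true).
Qed.

Lemma P_one_F_one u : P_one u -> F_one u.
Proof. by move/P_oneE/pact_feq. Qed.

End PolycyclicAction.

Section FreeReduction.

Variable Y : eqType.
Implicit Types (l : sletter Y) (u v w : seq (sletter Y)).

Definition cancel_letter l w :=
  if w is l' :: w' then (if l' == inv_letter l then w' else l :: w) else [:: l].

Definition free_red w := foldr cancel_letter [::] w.

Definition freely_reduced w := sorted (fun a b => b != inv_letter a) w.

Lemma freely_reduced_cancel_letter l w :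
  freely_reduced w -> freely_reduced (cancel_letter l w).
Proof.
case: w => [|l' w] //= Hw; case: eqP => [_|/eqP ne]; first exact: path_sorted Hw.
by rewrite /freely_reduced /= ne.
Qed.

Lemma free_red_reduced w : freely_reduced (free_red w).
Proof. by elim: w => [|l w IH] //=; apply: freely_reduced_cancel_letter. Qed.

Lemma cancel_letterK l w :
  freely_reduced w -> cancel_letter l (cancel_letter (inv_letter l) w) = w.
Proof.
case: l => y b; case: w => [|[y' b'] w] /=; first by rewrite eqxx.
rewrite /inv_letter /= negbK; case: eqP => [[-> ->]|ne] /=; last by rewrite eqxx.
by case: w => [|l'' w] //= /andP[/negbTE ->].
Qed.

Lemma free_red_cancel u l v :
  free_red (u ++ l :: inv_letter l :: v) = free_red (u ++ v).
Proof.
by rewrite /free_red !foldr_cat /= cancel_letterK //; apply: free_red_reduced.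
Qed.

Lemma free_red_F_one w : F_one w -> free_red w = [::].
Proof.
move=> H; apply: (@clos_refl_sym_trans_ind _ _ (fun x y => free_red x = free_red y)) H.
- by move=> _ _ [u v y b]; rewrite -(free_red_cancel u (y, b)).
- by [].
- by move=> x y _ ->.
- by move=> x y z _ -> _ ->.
Qed.

Lemma free_red_id w : freely_reduced w -> free_red w = w.
Proof.
elim: w => [|l w IH] //= Hw; rewrite IH; last exact: path_sorted Hw.
by case: w Hw {IH} => [|l' w] //= /andP[/negbTE ->].
Qed.

Lemma not_freely_reduced w :
  ~~ freely_reduced w -> exists u l v, w = u ++ l :: inv_letter l :: v.
Proof.
elim: w => [|l w IH] //; case: w IH => [|l' w] IH //=.
rewrite negb_and negbK => /orP[/eqP ->|/IH[u [l'' [v ->]]]].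
- by exists [::], l, w.
- by exists (l :: u), l'', v.
Qed.

Lemma F_one_cancellable w :
  F_one w -> w != [::] -> exists u l v, w = u ++ l :: inv_letter l :: v.
Proof.
move=> /free_red_F_one red0 w_ne; apply: not_freely_reduced.
by apply: contra w_ne => /free_red_id <-; rewrite red0.
Qed.

Lemma F_one_cancel u l v : F_one (u ++ l :: inv_letter l :: v) -> F_one (u ++ v).
Proof. by case: l => y b; apply: rst_trans; apply/rst_step/fstep_ins. Qed.

End FreeReduction.

Section AdmissibleWords.

Variables (Y : eqType) (G : rel Y).
Hypotheses (G_irr : irreflexive G) (G_trans : transitive G).
Implicit Types (l : sletter Y) (u v w : seq (sletter Y)).

Definition adm (a b : sletter Y) := [|| a.2, ~~ b.2 | G a.1 b.1].

Lemma adm_inv_letter l : adm l (inv_letter l) -> l.2.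
Proof. by case: l => y [] //=; rewrite /adm /= G_irr. Qed.

Lemma adm_skip c l d : l.2 -> adm c l -> adm (inv_letter l) d -> adm c d.
Proof.
case: l => y [] //= _; rewrite /adm /=.
by case: (c.2) => //= cy; case: (d.2) => //= /(G_trans cy) ->.
Qed.

Lemma path_adm_cancel x u l v :
  path adm x (u ++ l :: inv_letter l :: v) -> l.2 /\ path adm x (u ++ v).
Proof.
elim: u x => [|c u IH] x /=; last by case/andP=> -> /IH.
case/and3P=> xl /adm_inv_letter pos lv; split=> //.
by case: v lv => [|d v] //= /andP[ld ->]; rewrite (adm_skip pos xl ld).
Qed.

Lemma F_one_adm_P_one x w : path adm x w -> F_one w -> P_one w.
Proof.
elim: {w}(size w).+1 {-2}w (ltnSn (size w)) => // n IH w Hn Hs Hw.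
have [->|w_ne] := eqVneq w [::]; first by [].
have [u [l [v Ew]]] := F_one_cancellable Hw w_ne; subst w.
have [pos Hs'] := path_adm_cancel Hs.
move=> s; rewrite pact_cancel_pos //; apply: IH Hs' (F_one_cancel Hw) s.
by move: Hn; rewrite !size_cat /= !addnS ltnS => /ltnW.
Qed.

End AdmissibleWords.

Section EraseHash.

Variable X : eqType.
Implicit Types (S T : seq (option X)) (u : seq (sletter (option X))).

Definition erase_stack S : seq X := pmap id S.

Definition erase_word u : seq (sletter X) :=
  pmap (fun l => if l.1 is Some x then Some (x, l.2) else None) u.

Lemma erase_stack_rcons S o :
  erase_stack (rcons S o) = if o is Some x then rcons (erase_stack S) x else erase_stack S.
Proof. by rewrite /erase_stack -cats1 pmap_cat; case: o => [x|] /=; rewrite ?cats1 ?cats0. Qed.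

Lemma erase_stack_nil S : erase_stack S = [::] -> exists n, S = nseq n None.
Proof. by move=> H; exists (size S); elim: S H => [|[x|] S IH] //= /IH <-. Qed.

Lemma erase_stack_pop S t x : erase_stack S = rcons t x ->
  exists S1 n, S = rcons S1 (Some x) ++ nseq n None /\ erase_stack S1 = t.
Proof.
elim/last_ind: S => [|S [y|] IH]; rewrite ?erase_stack_rcons; first by case: t.
- by move/rcons_inj => [<- ->]; exists S, 0; rewrite cats0.
- move/IH => [S1 [n [-> <-]]]; exists S1, n.+1; split=> //.
  by rewrite nseqSr rcons_cat.
Qed.

Lemma pact_pop_hashes n S : pact (nseq n (None, false)) (S ++ nseq n None) = Some S.
Proof.
elim: n => [|n IH]; first by rewrite cats0.
by rewrite [in S ++ _]nseqSr -rcons_cat pact_pop.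
Qed.

Lemma pact_erase u S T :
  pact u S = Some T -> pact (erase_word u) (erase_stack S) = Some (erase_stack T).
Proof.
elim: u S => [|[[x|] []] u IH] S; first by move=> [->].
- by rewrite pact_push => /IH; rewrite erase_stack_rcons.
- by case/pact_popP=> S' -> /IH; rewrite erase_stack_rcons /= pact_pop.
- by rewrite pact_push => /IH; rewrite erase_stack_rcons.
- by case/pact_popP=> S' -> /IH; rewrite erase_stack_rcons.
Qed.

End EraseHash.

Section Paths.

Variables (Q Y Sigma : Type).
Implicit Types (e : edge Q Y Sigma) (es : seq (edge Q Y Sigma)).

Lemma path_label_cons e es :
  path_label (e :: es) = (e.1.2.1 ++ (path_label es).1, e.1.2.2 ++ (path_label es).2).
Proof. by []. Qed.

Lemma path_label_cat es1 es2 : path_label (es1 ++ es2) =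
  ((path_label es1).1 ++ (path_label es2).1, (path_label es1).2 ++ (path_label es2).2).
Proof. by rewrite /path_label !map_cat !flatten_cat. Qed.

Lemma is_path_cat E p q r es1 es2 :
  is_path E p q es1 -> is_path E q r es2 -> is_path E p r (es1 ++ es2).
Proof.
elim: es1 p => [|e es1 IH] p /=; first by move=> ->.
by case=> He [Hp Hes1] Hes2; split=> //; split=> //; apply: IH Hes2.
Qed.

End Paths.

Lemma P_accepts_F_accepts (Q : Type) (Y : eqType) (Sigma : Type)
    (B : automaton Q Y Sigma) w :
  P_accepts B w -> F_accepts B w.
Proof. by case=> es [q [? [? [/P_one_F_one ? ?]]]]; exists es, q. Qed.

Section HashAutomaton.

Variables (X Sigma : eqType) (Q : finType) (A : automaton Q X Sigma).
Local Notation E := (a_edges A).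
Local Notation E' := (a_edges (hash_automaton A)).

Variant hash_edge_spec : edge (Q + Q) (option X) Sigma -> Prop :=
| HashEps p q a of List.In (p, ([::], a), q) E :
    hash_edge_spec (inl p, ([::], a), inl q)
| HashPush p q x a of List.In (p, ([:: (x, true)], a), q) E :
    hash_edge_spec (inl p, ([:: (Some x, true); (None, true)], a), inl q)
| HashPop p q x a of List.In (p, ([:: (x, false)], a), q) E :
    hash_edge_spec (inr p, ([:: (Some x, false); (None, true)], a), inl q)
| HashSwitch q : hash_edge_spec (inl q, ([::], [::]), inr q)
| HashLoop q : hash_edge_spec (inr q, ([:: (None, false)], [::]), inr q).

Lemma hash_edgeP e : List.In e E' <-> hash_edge_spec e.
Proof.
rewrite InP /= !mem_cat; split.
- case/or3P=> [/flatten_mapP[[[p [y a]] q] /InP He]|/mapP[q _ ->]|/mapP[q _ ->]];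
    [|exact: HashSwitch|exact: HashLoop].
  by case: y He => [|[x []] [|? ?]] He //=; rewrite inE => /eqP ->; constructor.
- have hashed e0 e1 : List.In e0 E -> e1 \in hash_edge e0 ->
      e1 \in flatten (map (@hash_edge Q X Sigma) E).
    by move=> /InP He0 He; apply/flatten_mapP; exists e0.
  case=> [p q a He|p q x a He|p q x a He|q|q]; apply/or3P;
    try by apply/Or31/(hashed _ _ He); rewrite mem_head.
  + by apply/Or32/mapP; exists q; rewrite ?mem_enum.
  + by apply/Or33/mapP; exists q; rewrite ?mem_enum.
Qed.

Definition state_base (s : Q + Q) : Q := match s with inl q => q | inr q => q end.

Lemma hash_path_erase s1 s2 es' : is_path E' s1 s2 es' ->
  exists2 es, is_path E (state_base s1) (state_base s2) es &
    path_label es = (erase_word (path_label es').1, (path_label es').2).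
Proof.
elim: es' s1 => [|e es' IH] s1 /=; first by move=> ->; exists [::].
case=> /hash_edgeP He [<- {s1} /IH[es Hp Hl]].
case: e / He Hp Hl => [p q a He|p q x a He|p q x a He|q|q] Hp Hl;
  [exists ((p, ([::], a), q) :: es) | exists ((p, ([:: (x, true)], a), q) :: es)
  | exists ((p, ([:: (x, false)], a), q) :: es) | exists es | exists es] => //;
  by rewrite path_label_cons Hl.
Qed.

Definition below_hash : rel (option X) := fun a b => (a != None) && (b == None).

Lemma below_hash_irr : irreflexive below_hash.
Proof. by case. Qed.

Lemma below_hash_trans : transitive below_hash.
Proof. by move=> [y|] [x|] [z|]. Qed.

(* A phantom letter #^-1 in front of the minus copy forces the label to go on
   with a negative letter. *)
Definition state_mark (s : Q + Q) : sletter (option X) :=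
  (None, if s is inl _ then true else false).

Lemma hash_path_adm s1 s2 es :
  is_path E' s1 s2 es -> path (adm below_hash) (state_mark s1) (path_label es).1.
Proof.
elim: es s1 => [|e es IH] s1; first by [].
case=> /hash_edgeP He [<- {s1} /IH]; rewrite path_label_cons.
case: e / He => [p q a _|p q x a _|p q x a _|q|q] //=.
by case: (flatten _) => [|d w] //= /andP[_ ->].
Qed.

Definition hash_run p q (a : seq Sigma) S S' := exists es,
  [/\ is_path E' (inl p) (inl q) es, (path_label es).2 = a
    & pact (path_label es).1 S = Some S'].

Lemma hash_run_cat p q r a b S1 S2 S3 :
  hash_run p q a S1 S2 -> hash_run q r b S2 S3 -> hash_run p r (a ++ b) S1 S3.
Proof.
move=> [es1 [P1 <- L1]] [es2 [P2 <- L2]]; exists (es1 ++ es2).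
by rewrite path_label_cat pact_cat L1; split=> //; apply: is_path_cat P1 P2.
Qed.

Lemma hash_drain q n : exists2 es, is_path E' (inl q) (inr q) es &
  path_label es = (nseq n (None, false), [::]).
Proof.
exists ((inl q, ([::], [::]), inr q) :: nseq n (inr q, ([:: (None, false)], [::]), inr q)).
  split; first exact/hash_edgeP/HashSwitch.
  by split=> //; elim: n => //= n IH; split; first exact/hash_edgeP/HashLoop.
by elim: n => // n; rewrite !path_label_cons => /= [[-> ->]].
Qed.

Lemma hash_edge_simulate p y a q S t :
  List.In (p, (y, a), q) E -> size y <= 1 -> pact y (erase_stack S) = Some t ->
  exists2 S', hash_run p q a S S' & erase_stack S' = t.
Proof.
case: y => [|[x []] [|? ?]] // He _.
- move=> [<-]; exists S => //; exists [:: (inl p, ([::], a), inl q)].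
  by rewrite /path_label /= !cats0; split=> //; split; first exact/hash_edgeP/HashEps.
- move=> [<-]; exists (rcons (rcons S (Some x)) None); last by rewrite !erase_stack_rcons.
  exists [:: (inl p, ([:: (Some x, true); (None, true)], a), inl q)].
  by rewrite /path_label /= !cats0; split=> //; split; first exact/hash_edgeP/HashPush.
- case/pact_popP=> t' /erase_stack_pop[S1 [n [-> <-]]] [<-].
  exists (rcons S1 None); last by rewrite erase_stack_rcons.
  have [es Hp Hl] := hash_drain p n.
  exists (rcons es (inr p, ([:: (Some x, false); (None, true)], a), inl q)).
  rewrite -cats1 path_label_cat Hl /= !cats0 pact_cat pact_pop_hashes.
  split=> //; first by apply: is_path_cat Hp _; split; first exact/hash_edgeP/HashPop.
  by rewrite pact_pop.
Qed.

Hypothesis small_labels : forall e, List.In e E -> size e.1.2.1 <= 1.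

Lemma hash_path_simulate p q es S t : is_path E p q es ->
  pact (path_label es).1 (erase_stack S) = Some t ->
  exists2 S', hash_run p q (path_label es).2 S S' & erase_stack S' = t.
Proof.
elim: es p S => [|[[p' [y a]] r] es IH] p S.
  by move=> -> [<-]; exists S => //; exists [::].
case=> He [Ep Hp]; rewrite path_label_cons pact_cat; move: Ep => /= <-.
case Ey: pact => [t1|] // Hrest.
have [S1 run1 ES1] := hash_edge_simulate He (small_labels He) Ey.
rewrite -ES1 in Hrest; have [S2 run2 <-] := IH _ _ Hp Hrest.
by exists S2 => //; apply: hash_run_cat run1 run2.
Qed.

Lemma P_accepts_hash_complete w : P_accepts A w -> P_accepts (hash_automaton A) w.
Proof.
case=> es [q [Hp [Hf [/P_oneE Hone <-]]]].
have [S' [es' [Hp' Hl2 Hl1]] /erase_stack_nil[n ES]] := hash_path_simulate (S := [::]) Hp Hone.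
have [esd Hpd Hld] := hash_drain q n.
exists (es' ++ esd), (inr q); split; first exact: is_path_cat Hp' Hpd.
split=> //; rewrite path_label_cat Hld Hl2 cats0; split=> //.
by apply/P_oneE; rewrite pact_cat Hl1 ES -[nseq _ None]cat0s pact_pop_hashes.
Qed.

Lemma P_accepts_hash_sound w : P_accepts (hash_automaton A) w -> P_accepts A w.
Proof.
case=> es' [s [Hpath [Hf [/P_oneE Hone Hw]]]].
case: s Hpath Hf => // q /hash_path_erase[es Hp Hl] Hf.
exists es, q; split=> //; split=> //; rewrite Hl; split=> //.
by apply/P_oneE; apply: (pact_erase Hone).
Qed.

Lemma F_accepts_hash_P_accepts w :
  F_accepts (hash_automaton A) w -> P_accepts (hash_automaton A) w.
Proof.
case=> es [s [Hp [Hf [Hone Hw]]]]; exists es, s; do 3!split=> //.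
exact: (F_one_adm_P_one below_hash_irr below_hash_trans (hash_path_adm Hp)).
Qed.

End HashAutomaton.

Theorem theorem4p3 (X Sigma Q : finType) (A : automaton Q X Sigma) :
  (forall e, List.In e (a_edges A) -> size e.1.2.1 <= 1 /\ size e.1.2.2 <= 1) ->
  (forall w : seq Sigma, F_accepts (hash_automaton A) w <-> P_accepts A w) /\
  (forall w : seq Sigma, P_accepts (hash_automaton A) w <-> P_accepts A w).
Proof.
move=> small; have small1 e (He : List.In e (a_edges A)) := (small e He).1.
split=> w; split.
- by move/F_accepts_hash_P_accepts/P_accepts_hash_sound.
- by move/(P_accepts_hash_complete small1)/P_accepts_F_accepts.
- exact: P_accepts_hash_sound.
- exact: P_accepts_hash_complete.
Qed.
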